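(* Let $p\in(0,1)$ and $c\in(0,1)$, and set $\lambda_i=c^{i-1}$ for $i\ge1$. Let $r_1,r_2,\dots$ be $\{0,1\}$-valued random variables with $\Pr(r_1=1)=p$ and, for every $n\ge2$, $\Pr(r_n=1\mid r_1,\dots,r_{n-1})=\lambda_n p+(1-\lambda_n)\bar p_{n-1}$, where $\bar p_m=\frac1m\sum_{i=1}^m r_i$. Then \[\lim_{n\to\infty}\mathbb{E}\big[|\bar p_n-p|\big]\ge 2p(1-p)\exp\big(-c\,\phi(c,1,2)-c^2\,\phi(c^2,2,2)\big),\] where $\phi(z,s,a)=\sum_{k=0}^\infty\frac{z^k}{(a+k)^s}$ is the Lerch transcendent.
   Context: For $|z|<1$ the series defining $\phi(z,s,a)$ converges. *)

From HB Require Import structures.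
From mathcomp Require Import all_boot all_order all_algebra.
From mathcomp Require Import all_classical all_reals all_analysis.
Set Implicit Arguments. Unset Strict Implicit. Unset Printing Implicit Defensive.
Import Order.TTheory GRing.Theory Num.Theory.
Import numFieldNormedType.Exports.
Local Open Scope classical_set_scope.
Local Open Scope ring_scope.

(* Lerch transcendent phi(z,s,a) = sum_{k>=0} z^k/(a+k)^s, for natural s
   (only s = 1, 2 are needed); the series converges for |z| < 1. *)
Definition lerch (R : realType) (z : R) (s : nat) (a : R) : R :=
  limn (fun N : nat => \sum_(0 <= k < N) z ^+ k / (a + k%:R) ^+ s).

Definition lam (R : realType) (c : R) (i : nat) : R := c ^+ i.-1.

Definition pbar (R : realType) (T : Type) (r : nat -> T -> R) (m : nat) (w : T) : R :=
  m%:R^-1 * \sum_(1 <= i < m.+1) r i w.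

Definition pbar_hist (R : realType) (b : nat -> bool) (m : nat) : R :=
  m%:R^-1 * \sum_(1 <= i < m.+1) (b i)%:R.

Definition hist_event (R : realType) (T : Type) (r : nat -> T -> R)
  (m : nat) (b : nat -> bool) : set T :=
  [set w | forall i, (1 <= i <= m)%N -> r i w = (b i)%:R].

From HB Require Import structures.
From mathcomp Require Import all_boot all_order all_algebra.
From mathcomp Require Import all_classical all_reals all_analysis.
From mathcomp Require Import ring lra measurable_realfun.
Import Order.TTheory GRing.Theory Num.Theory.
Import numFieldNormedType.Exports.
Local Open Scope classical_set_scope.
Local Open Scope ring_scope.

(* Let a_m = E|pbar_m - p|.  Given r_1, ..., r_m, the next running mean pbar_(m+1)
   has conditional mean p + (1 - x_m) (pbar_m - p) with x_m = lam_(m+1) / (m+1),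
   so summing Jensen's inequality over the 2^m histories gives
   a_(m+1) >= (1 - x_m) a_m.  Since 0 <= x_m <= 1/2 and 1 - x >= exp (-(x + x^2))
   on [0, 1/2], a_m exp (sum_(1<=k<m) (x_k + x_k^2)) is nondecreasing
   and bounded, so a_m converges to a limit at least a_1 exp (-S), where
   S = sum_(m>=1) (x_m + x_m^2) = c phi(c,1,2) + c^2 phi(c^2,2,2) and
   a_1 = E|r_1 - p| = 2 p (1 - p). *)

Section real_lemmas.
Context {R : realType}.

Lemma le1_1B_expRD_sqr (x : R) : 0 <= x <= 1/2 -> 1 <= (1 - x) * expR (x + x ^+ 2).
Proof.
case/andP=> x0 x_le.
set y := x + x ^+ 2; set u := y / 6.
have y0 : 0 <= y by rewrite addr_ge0 // sqr_ge0.
have u0 : 0 <= u by rewrite divr_ge0.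
have yE : y = 6 * u by rewrite /u mulrC divfK.
(* expR y = expR u ^+ 6 >= (1 + u) ^+ 6, of which the first four binomial terms are kept *)
have exp_ge : 1 + y + 5/12 * y ^+ 2 + 5/54 * y ^+ 3 <= expR y.
  have -> : expR y = expR u ^+ 6 by rewrite -expRM_natl -yE.
  apply: le_trans (lerXn2r _ _ _ (expR_ge1Dx u)); rewrite ?nnegrE ?expR_ge0 ?addr_ge0 //.
  have u4 : 0 <= u ^+ 4 by exact: exprn_ge0.
  have u5 : 0 <= u ^+ 5 by exact: exprn_ge0.
  have u6 : 0 <= u ^+ 6 by exact: exprn_ge0.
  have -> : (1 + u) ^+ 6 = 1 + y + 5/12 * y ^+ 2 + 5/54 * y ^+ 3
                           + 15 * u ^+ 4 + 6 * u ^+ 5 + u ^+ 6.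
    by rewrite yE !exprS expr0; field.
  lra.
have poly_ge : 1 <= (1 - x) * (1 + y + 5/12 * y ^+ 2 + 5/54 * y ^+ 3).
  set q := 5/12 - 53/108 * x - 25/108 * x ^+ 2 - 5/12 * x ^+ 3
           - 5/27 * x ^+ 4 - 5/54 * x ^+ 5.
  have -> : (1 - x) * (1 + y + 5/12 * y ^+ 2 + 5/54 * y ^+ 3) = 1 + x ^+ 2 * q.
    by rewrite /q /y !exprS expr0; field.
  have q0 : 0 <= q.
    have x2 : x ^+ 2 <= 1/4 by rewrite expr2; nra.
    have x3 : x ^+ 3 <= 1/8 by rewrite exprS; nra.
    have x4 : x ^+ 4 <= 1/16 by rewrite exprS; nra.
    have x5 : x ^+ 5 <= 1/32 by rewrite exprS; nra.
    rewrite /q; lra.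
  by rewrite lerDl mulr_ge0 // sqr_ge0.
apply: le_trans poly_ge _; apply: ler_wpM2l => //; lra.
Qed.

Lemma almost_nondecreasing_cvgn (x a : R ^nat) (S M : R) :
  (forall n, 0 <= x n <= 1/2) -> series (fun n => x n + x n ^+ 2) @ \oo --> S ->
  (forall n, 0 <= a n <= M) -> (forall n, (1 - x n) * a n <= a n.+1) ->
  exists2 l, a @ \oo --> l & a 0%N * expR (- S) <= l.
Proof.
move=> x01 xS aM ax.
set s := series _ in xS.
have s_nd : nondecreasing_seq s.
  apply: nondecreasing_series => n _ _.
  by case/andP: (x01 n) => x0 _; rewrite addr_ge0 // sqr_ge0.
have s_le n : s n <= S.
  by rewrite -(cvg_lim _ xS) //; apply: nondecreasing_cvgn_le => //; exact: cvgP xS.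
pose w n := a n * expR (s n).
have w_nd : nondecreasing_seq w.
  apply/nondecreasing_seqP => n; rewrite /w /s seriesSr expRD mulrCA [a n * _]mulrC.
  apply: ler_wpM2l; first exact: expR_ge0.
  have [a0 _] := andP (aM n).
  apply: le_trans (ler_wpM2r (expR_ge0 _) (ax n)); rewrite mulrAC ler_peMl //.
  exact: le1_1B_expRD_sqr.
have w_cvg : cvgn w.
  apply: nondecreasing_is_cvgn => //; exists (M * expR S) => _ [n _ <-].
  by case/andP: (aM n) => a0 aM'; rewrite ler_pM ?expR_ge0 ?ler_expR.
exists (limn w * expR (- S)).
  have -> : a = fun n => w n * expR (- s n).
    by apply: funext => n; rewrite /w -mulrA -expRD subrr expR0 mulr1.
  apply: cvgM => //; apply: continuous_cvg; [exact: continuous_expR | exact: cvgN].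
apply: ler_wpM2r; first exact: expR_ge0.
have -> : a 0%N = w 0%N by rewrite /w /s /series /= big_geq // expR0 mulr1.
exact: nondecreasing_cvgn_le.
Qed.

Lemma lerch_cvg (z a : R) (s : nat) : 0 <= z < 1 -> 1 <= a ->
  series (fun k => z ^+ k / (a + k%:R) ^+ s) @ \oo --> lerch z s a.
Proof.
case/andP=> z0 z1 a1.
have ak k : 1 <= (a + k%:R) ^+ s by rewrite exprn_ege1 // ler_wpDr.
suff : cvgn (series (fun k => z ^+ k / (a + k%:R) ^+ s)) by [].
apply: (@series_le_cvg _ _ (geometric 1 z)) => [k|k|k|].
- by apply: divr_ge0; [exact: exprn_ge0 | exact: le_trans ler01 (ak k)].
- by rewrite /= mul1r exprn_ge0.
- by rewrite /= mul1r ler_pdivrMr ?(lt_le_trans ltr01 (ak k)) // ler_peMr ?exprn_ge0.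
- by apply: is_cvg_geometric_series; rewrite ger0_norm.
Qed.

Lemma lam_rate_series_cvg (c : R) : 0 <= c -> c < 1 ->
  series (fun j => lam c j.+2 / j.+2%:R + (lam c j.+2 / j.+2%:R) ^+ 2) @ \oo -->
  c * lerch c 1 2 + c ^+ 2 * lerch (c ^+ 2) 2 2.
Proof.
move=> c0 c1.
have c2 : 0 <= c ^+ 2 < 1 by rewrite exprn_ge0 //= expr_lt1.
set f := fun k => c ^+ k / (2 + k%:R) ^+ 1.
set g := fun k => (c ^+ 2) ^+ k / (2 + k%:R) ^+ 2.
have -> : (fun j => lam c j.+2 / j.+2%:R + (lam c j.+2 / j.+2%:R) ^+ 2) =
          c *: f + c ^+ 2 *: g.
  apply/funext => j.
  change (lam c j.+2 / j.+2%:R + (lam c j.+2 / j.+2%:R) ^+ 2 = c * f j + c ^+ 2 * g j).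
  rewrite /f /g /lam /= -addn2 natrD [_ + 2]addrC exprAC exprS.
  by field; rewrite -natrD pnatr_eq0.
rewrite seriesD !seriesZ; apply: cvgD; apply: cvgZl_tmp.
  by apply: lerch_cvg; rewrite ?c0 ?c1 ?ler1n.
by apply: lerch_cvg; rewrite ?ler1n.
Qed.

Lemma lam_rate_ge0_le_half (c : R) j : 0 <= c <= 1 -> 0 <= lam c j.+2 / j.+2%:R <= 1/2.
Proof.
case/andP=> c0 c1; rewrite divr_ge0 ?exprn_ge0 //= ler_pdivrMr // /lam /=.
rewrite (le_trans (exprn_ile1 _ c0 c1)) // -[j.+2]addn2 natrD.
by have : (0 : R) <= j%:R := ler0n _ _; lra.
Qed.

Lemma abs_running_mean_step (m : nat) (p pb l pi pi1 pi0 : R) :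
  l <= 1 -> 0 <= pi1 -> 0 <= pi0 -> pi = pi1 + pi0 ->
  pi1 = (l * p + (1 - l) * pb) * pi ->
  (1 - l / m.+1%:R) * (`|pb - p| * pi) <=
  `|(m%:R * pb + 1) / m.+1%:R - p| * pi1 + `|m%:R * pb / m.+1%:R - p| * pi0.
Proof.
move=> l1 pi1_ge0 pi0_ge0 piE pi1E.
have m1 : (0 : R) < m.+1%:R := ltr0Sn _ _.
have lm : 0 <= 1 - l / m.+1%:R.
  by rewrite subr_ge0 ler_pdivrMr // mul1r (le_trans l1) // ler1n.
have pi_ge0 : 0 <= pi by rewrite piE addr_ge0.
(* the conditional mean of the next running mean is p + (1 - l/(m+1)) (pb - p) *)
have driftE : ((m%:R * pb + 1) / m.+1%:R - p) * pi1 + (m%:R * pb / m.+1%:R - p) * pi0 =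
              (1 - l / m.+1%:R) * ((pb - p) * pi).
  have -> : pi0 = pi - pi1 by rewrite piE addrAC subrr add0r.
  by rewrite pi1E -natr1; field; rewrite natr1 pnatr_eq0.
rewrite -(ger0_norm pi_ge0) -normrM -(ger0_norm lm) -normrM -driftE.
apply: le_trans (ler_normD _ _) _.
by rewrite !normrM (ger0_norm pi1_ge0) (ger0_norm pi0_ge0).
Qed.

End real_lemmas.

Section expectation_partition.
Context {d : measure_display} {T : measurableType d} {R : realType} (P : probability T R).

Lemma expectation_partition (I : finType) (S : I -> set T) (lab : T -> I) (g : I -> R) :
  (forall i, measurable (S i)) -> (forall i w, S i w <-> lab w = i) ->
  (forall i, 0 <= g i) ->
  ('E_P[fun w => g (lab w)] = (\sum_i g i * fine (P (S i)))%:E)%E.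
Proof.
move=> mS Slab g0.
have -> : (fun w => g (lab w)) = (fun w => \sum_i g i * \1_(S i) w).
  apply/funext => w; rewrite (bigD1 (lab w)) //= big1 => [|i ilab].
    by rewrite indicE mem_set ?mulr1 ?addr0 //; apply/Slab.
  by rewrite indicE memNset ?mulr0 // => /Slab wi; rewrite wi eqxx in ilab.
rewrite unlock; under eq_integral do rewrite -sumEFin.
rewrite ge0_integral_sum // => [|i|i w _].
- rewrite -sumEFin; apply: eq_bigr => i _.
  rewrite (@integralZl_indic _ _ _ _ _ measurableT (fun _ => S i)) //.
    by rewrite integral_indic // setIT EFinM fineK //; exact: fin_num_measure.
  by move=> /lt_geF; rewrite g0.
- apply/measurable_EFinP; apply: measurable_funM; first exact: measurable_cst.
  exact: measurable_indic.
- by rewrite lee_fin mulr_ge0 // indicE ler0n.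
Qed.

End expectation_partition.

Lemma pbarS (T : Type) (R : realType) (x : nat -> T -> R) m w :
  pbar x m.+1 w = (m%:R * pbar x m w + x m.+1 w) / m.+1%:R.
Proof.
rewrite /pbar big_nat_recr //= mulrC; congr ((_ + _) / _).
case: m => [|m]; first by rewrite big_geq // mulr0 mul0r.
by rewrite mulrA mulfV ?mul1r // pnatr_eq0.
Qed.

(* bits are numbered from 1, as in [hist_event]; bits outside [1, m] are [false] *)
Definition hist_of {m} (t : {ffun 'I_m -> bool}) (i : nat) : bool :=
  if insub i.-1 is Some j then t j else false.

Lemma hist_ofS m (t : {ffun 'I_m -> bool}) (j : 'I_m) : hist_of t j.+1 = t j.
Proof. by rewrite /hist_of /= valK. Qed.

Lemma pbar_hist_ge0_le1 (R : realType) (b : nat -> bool) m : 0 <= pbar_hist R b m <= 1.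
Proof.
rewrite /pbar_hist; case: m => [|m]; first by rewrite invr0 mul0r lexx ler01.
have sum_le : \sum_(1 <= i < m.+2) ((b i)%:R : R) <= m.+1%:R.
  have -> : m.+1%:R = \sum_(1 <= i < m.+2) (1 : R) by rewrite sumr_const_nat subn1.
  apply: ler_sum => i _.
  by case: (b i); rewrite ?ler01.
by rewrite mulr_ge0 ?invr_ge0 ?sumr_ge0 //= mulrC ler_pdivrMr ?ltr0Sn // mul1r.
Qed.

Section running_mean.
Context {d : measure_display} {T : measurableType d} {R : realType} {P : probability T R}
  (r : nat -> {RV P >-> R}).
Hypothesis r01 : forall n w, (1 <= n)%N -> r n w = 0 \/ r n w = 1.

Local Notation rv := (fun i => r i : T -> R).

Definition history m w : {ffun 'I_m -> bool} := [ffun j : 'I_m => r j.+1 w == 1].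

Lemma r_bool n w : (1 <= n)%N -> r n w = (r n w == 1)%:R.
Proof. by move=> n1; case: (r01 _ w n1) => ->; rewrite ?eqxx // eq_sym oner_eq0. Qed.

Lemma r_eq_bool n w (b : bool) : (1 <= n)%N -> r n w = b%:R <-> (r n w == 1) = b.
Proof.
move=> n1; rewrite {1}(r_bool _ w n1); split=> [|-> //].
by move/eqP; rewrite eqr_nat; case: b; case: (r n w == 1).
Qed.

Lemma hist_eventP m t w : hist_event rv m (hist_of t) w <-> history m w = t.
Proof.
split=> [Ew | <- i /andP[i1 im]].
- apply/ffunP => j; rewrite ffunE; apply/r_eq_bool => //.
  by rewrite -hist_ofS; apply: Ew; rewrite /= ltn_ord.
- case: i i1 im => // i _ im.
  by rewrite (hist_ofS _ _ (Ordinal im)) ffunE -r_bool.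
Qed.

Lemma measurable_r_eq n x : measurable [set w | r n w = x].
Proof. exact: measurable_funPTI (measurable_set1 _). Qed.

Lemma measurable_hist_event m b : measurable (hist_event rv m b).
Proof.
have -> : hist_event rv m b =
    \bigcap_i (if (1 <= i <= m)%N then [set w | r i w = (b i)%:R] else setT).
  apply/seteqP; split=> w /= Ew i.
  - by move=> _; case: ifPn => // /Ew.
  - by move=> im; have := Ew i I; rewrite im.
apply: bigcapT_measurable => i.
by case: ifP => _; [exact: measurable_r_eq | exact: measurableT].
Qed.

Lemma pbar_hist_event m b w : hist_event rv m b w -> pbar rv m w = pbar_hist R b m.
Proof.
move=> Ew; rewrite /pbar /pbar_hist; congr (_ * _).
by apply: eq_big_nat => i /andP[i1 im]; apply: Ew; rewrite i1 -ltnS.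
Qed.

Lemma prob_split_bit n A : (1 <= n)%N -> measurable A ->
  fine (P A) = fine (P (A `&` [set w | r n w = 1])) + fine (P (A `&` [set w | r n w = 0])).
Proof.
move=> n1 mA.
have mAx x : measurable (A `&` [set w | r n w = x]).
  by apply: measurableI => //; exact: measurable_r_eq.
have AE : A = (A `&` [set w | r n w = 1]) `|` (A `&` [set w | r n w = 0]).
  apply/seteqP; split=> [w Aw | w [] []] //=.
  by case: (r01 _ w n1) => rw; [right | left].
rewrite {1}AE measureU // ?fineD ?fin_num_measure //.
by apply/seteqP; split=> w // [[_ /= ->] [_ /eqP]]; rewrite oner_eq0.
Qed.

Definition mean_abs_dev (p : R) m : R :=
  \sum_(t : {ffun 'I_m -> bool})
    `|pbar_hist R (hist_of t) m - p| * fine (P (hist_event rv m (hist_of t))).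

Lemma expectation_abs_dev p m :
  ('E_P[fun w => (`|pbar rv m w - p|)%R] = (mean_abs_dev p m)%:E)%E.
Proof.
have -> : (fun w => `|pbar rv m w - p|) =
          (fun w => `|pbar_hist R (hist_of (history m w)) m - p|).
  apply/funext => w.
  by rewrite (@pbar_hist_event m (hist_of (history m w)) w) //; apply/hist_eventP.
apply: expectation_partition => // [t|t w]; first exact: measurable_hist_event.
exact: hist_eventP.
Qed.

Lemma sum_prob_hist_event m :
  \sum_(t : {ffun 'I_m -> bool}) fine (P (hist_event rv m (hist_of t))) = 1.
Proof.
apply: EFin_inj; rewrite -(expectation_cst P 1).
under eq_bigr do rewrite -[fine _]mul1r.
apply/esym/(@expectation_partition _ _ _ P _ _ (history m) (fun=> 1)) => [t|t w|_].
- exact: measurable_hist_event.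
- exact: hist_eventP.
- exact: ler01.
Qed.

Lemma mean_abs_dev_ge0_le1 p m : 0 <= p <= 1 -> 0 <= mean_abs_dev p m <= 1.
Proof.
move=> /andP[p0 p1]; rewrite sumr_ge0 => [/=|t _]; last first.
  by rewrite mulr_ge0 // fine_ge0 // measure_ge0.
rewrite -(sum_prob_hist_event m) ler_sum // => t _.
rewrite ler_piMl ?fine_ge0 ?measure_ge0 //.
by have /andP[] := pbar_hist_ge0_le1 R (hist_of t) m; rewrite ler_norml; lra.
Qed.

Section law.
Variables p c : R.
Hypothesis r1_law : P [set w | r 1%N w = 1] = p%:E.
Hypothesis r_law : forall (n : nat) (b : nat -> bool), (2 <= n)%N ->
  P (hist_event rv n.-1 b `&` [set w | r n w = 1]) =
  ((lam c n * p + (1 - lam c n) * pbar_hist R b n.-1)%:E * P (hist_event rv n.-1 b))%E.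

Lemma mean_abs_devS m : mean_abs_dev p m.+1 =
  \sum_(t : {ffun 'I_m -> bool}) \sum_(e : bool)
    `|(m%:R * pbar_hist R (hist_of t) m + e%:R) / m.+1%:R - p| *
    fine (P (hist_event rv m (hist_of t) `&` [set w | r m.+1 w = e%:R])).
Proof.
apply: EFin_inj; rewrite pair_bigA -expectation_abs_dev.
pose g (te : {ffun 'I_m -> bool} * bool) :=
  `|(m%:R * pbar_hist R (hist_of te.1) m + te.2%:R) / m.+1%:R - p|.
have -> : (fun w => `|pbar rv m.+1 w - p|) = (fun w => g (history m w, r m.+1 w == 1)).
  apply/funext => w; rewrite /g pbarS /= -r_bool //.
  by rewrite (@pbar_hist_event m (hist_of (history m w)) w) //; apply/hist_eventP.
apply: expectation_partition => [[t e]|[t e] w|te]; rewrite /=.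
- by apply: measurableI; [exact: measurable_hist_event | exact: measurable_r_eq].
- rewrite hist_eventP r_eq_bool //; split=> [[-> ->] // | [<- <-]] //.
- exact: normr_ge0.
Qed.

Lemma mean_abs_dev_step m : (0 < m)%N -> 0 <= c <= 1 ->
  (1 - lam c m.+1 / m.+1%:R) * mean_abs_dev p m <= mean_abs_dev p m.+1.
Proof.
move=> m0 /andP[c0 c1].
rewrite mean_abs_devS /mean_abs_dev mulr_sumr.
apply: ler_sum => t _; rewrite big_bool /= addr0.
have mE := measurable_hist_event m (hist_of t).
have := r_law m.+1 (hist_of t) m0; rewrite /= => law.
apply: abs_running_mean_step.
- by rewrite /lam exprn_ile1.
- exact: fine_ge0 (measure_ge0 _ _).
- exact: fine_ge0 (measure_ge0 _ _).
- exact: prob_split_bit.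
- by rewrite law fineM // fin_num_measure.
Qed.

Lemma mean_abs_dev1 : 0 <= p <= 1 -> mean_abs_dev p 1 = 2 * p * (1 - p).
Proof.
move=> /andP[p0 p1].
have split1 := prob_split_bit 1 setT isT measurableT.
rewrite !setTI probability_setT r1_law /= in split1.
have -> : 2 * p * (1 - p) = \sum_(e : bool) `|e%:R - p| * fine (P [set w | r 1 w = e%:R]).
  rewrite big_bool /= r1_law /= (_ : fine _ = 1 - p); last by lra.
  by rewrite sub0r normrN !ger0_norm ?subr_ge0 //; ring.
apply: EFin_inj; rewrite -expectation_abs_dev.
have -> : (fun w => `|pbar rv 1 w - p|) =
          (fun w => (fun e : bool => `|e%:R - p|) (r 1 w == 1)).
  by apply/funext => w; rewrite /pbar big_nat1 invr1 mul1r -r_bool.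
apply: expectation_partition => [e|e w|e]; first exact: measurable_r_eq.
- exact: r_eq_bool.
- exact: normr_ge0.
Qed.

End law.
End running_mean.

Theorem propositionA8 (d : measure_display) (T : measurableType d)
  (R : realType) (P : probability T R) (p c : R)
  (r : nat -> {RV P >-> R}) :
  0 < p < 1 -> 0 < c < 1 ->
  (forall n w, (1 <= n)%N -> r n w = 0 \/ r n w = 1) ->
  P [set w | r 1%N w = 1] = p%:E ->
  (forall (n : nat) (b : nat -> bool), (2 <= n)%N ->
     P (hist_event (fun i => r i : T -> R) n.-1 b `&` [set w | r n w = 1]) =
     ((lam c n * p + (1 - lam c n) * pbar_hist R b n.-1)%:E *
       P (hist_event (fun i => r i : T -> R) n.-1 b))%E) ->
  exists l : R,
    ('E_P[fun w => (`|pbar (fun i => r i : T -> R) n w - p|)%R] @[n --> \oo]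
       --> l%:E)%E /\
    2 * p * (1 - p) *
      expR (- (c * lerch c 1 2) - c ^+ 2 * lerch (c ^+ 2) 2 2) <= l.
Proof.
move=> /andP[p0 p1] /andP[c0 c1] r01 r1_law r_law.
have p01 : 0 <= p <= 1 by rewrite !ltW.
have c01 : 0 <= c <= 1 by rewrite !ltW.
have [l dev_cvg dev_ge] := almost_nondecreasing_cvgn
  (fun j => lam c j.+2 / j.+2%:R) (fun n => mean_abs_dev r p n.+1) _ 1
  (fun j => lam_rate_ge0_le_half c j c01) (lam_rate_series_cvg c (ltW c0) c1)
  (fun n => mean_abs_dev_ge0_le1 r r01 p n.+1 p01)
  (fun j => mean_abs_dev_step r r01 p c r_law j.+1 isT c01).
exists l; split.
- under eq_fun do rewrite expectation_abs_dev //.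
  apply: cvg_EFin; first exact: nearW.
  by rewrite -cvg_shiftS.
- by rewrite -(mean_abs_dev1 r r01 p r1_law p01) -opprD.
Qed.
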